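(* Let $\mathcal{H}$ be a complex separable Hilbert space and $\mathcal{E}(\mathcal{H})$ its set of effects. The function $\mathcal{S}_1:\mathcal{E}(\mathcal{H})\to\mathbb{R}$, $$\mathcal{S}_1(A):=\bigl(\|A\|+\|I-A\|-1\bigr)-\bigl(\|A(I-A)\|+\|I-A(I-A)\|-1\bigr),$$ satisfies the requirements (S1)–(S6), i.e. it is a sharpness measure.
   Context: An effect is a selfadjoint bounded operator $A$ on $\mathcal{H}$ with $\mathbb{O}\le A\le I$; $A':=I-A$. An effect is trivial if $A=\lambda I$, $\lambda\in[0,1]$; a nontrivial projection is a projection other than $\mathbb{O},I$. Norms are operator norms. Requirements for $\mathcal{S}:\mathcal{E}(\mathcal{H})\to\mathbb{R}$: (S1) $0\le\mathcal{S}(A)\le1$; (S2) $\mathcal{S}(A)=0$ iff $A$ is trivial; (S3) $\mathcal{S}(A)=1$ iff $A$ is a nontrivial projection; (S4) $\mathcal{S}(A')=\mathcal{S}(A)$; (S5) $\mathcal{S}(CAC^{-1})=\mathcal{S}(A)$ for every invertible bounded $C$ such that $CAC^{-1}$ is an effect; (S6) $A\mapsto\mathcal{S}(A)$ is operator-norm continuous. *)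

From HB Require Import structures.
From mathcomp Require Import all_boot all_order all_algebra.
From mathcomp Require Import boolp classical_sets reals.
From mathcomp Require Import complex.
Set Implicit Arguments. Unset Strict Implicit. Unset Printing Implicit Defensive.
Import Order.TTheory GRing.Theory Num.Theory.
Local Open Scope ring_scope.
Local Open Scope classical_set_scope.

Section Hilbert.
Variables (R : realType) (H : lmodType R[i]) (ip : H -> H -> R[i]).

Definition is_inner_product : Prop :=
  [/\ (forall (a : R[i]) x y z, ip (a *: x + y) z = a * ip x z + ip y z),
      (forall x y, ip y x = (ip x y)^*),
      (forall x, 0 <= ip x x) &
      (forall x, ip x x = 0 -> x = 0)].

Definition hnorm (x : H) : R := Num.sqrt (complex.Re (ip x x)).

Definition hcomplete : Prop :=
  forall u : nat -> H,
    (forall e : R, 0 < e -> exists N, forall m n, (N <= m)%N -> (N <= n)%N ->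
        hnorm (u m - u n) < e) ->
    exists l, forall e : R, 0 < e -> exists N, forall n, (N <= n)%N ->
        hnorm (u n - l) < e.

Definition hseparable : Prop :=
  exists d : nat -> H, forall x (e : R), 0 < e -> exists n, hnorm (x - d n) < e.

Definition is_linear_op (T : H -> H) : Prop :=
  forall (a : R[i]) x y, T (a *: x + y) = a *: T x + T y.

Definition is_bounded_op (T : H -> H) : Prop :=
  is_linear_op T /\ exists M : R, forall x, hnorm (T x) <= M * hnorm x.

Definition opnorm (T : H -> H) : R :=
  sup [set hnorm (T x) | x in [set x | hnorm x <= 1]].

Definition selfadjoint (T : H -> H) : Prop :=
  is_bounded_op T /\ forall x y, ip (T x) y = ip x (T y).

Definition Iop : H -> H := fun x => x.
Definition Oop : H -> H := fun _ => 0.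
Definition compl_op (A : H -> H) : H -> H := fun x => x - A x.
Definition sub_op (A B : H -> H) : H -> H := fun x => A x - B x.

Definition effect (A : H -> H) : Prop :=
  selfadjoint A /\
  (forall x, 0 <= ip (A x) x) /\ (forall x, ip (A x) x <= ip x x).

Definition trivial_effect (A : H -> H) : Prop :=
  exists l : R, 0 <= l <= 1 /\ A = (fun x => (l%:C)%C *: x).

Definition projection (A : H -> H) : Prop :=
  selfadjoint A /\ A \o A = A.

Definition nontrivial_projection (A : H -> H) : Prop :=
  projection A /\ A <> Oop /\ A <> Iop.

Definition invertible_bounded (C : H -> H) (D : H -> H) : Prop :=
  [/\ is_bounded_op C, is_bounded_op D,
      (forall x, C (D x) = x) & (forall x, D (C x) = x)].

Definition sharpness_measure (S : (H -> H) -> R) : Prop :=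
  (* S1 *) (forall A, effect A -> 0 <= S A <= 1) /\
  (* S2 *) (forall A, effect A -> (S A = 0 <-> trivial_effect A)) /\
  (* S3 *) (forall A, effect A -> (S A = 1 <-> nontrivial_projection A)) /\
  (* S4 *) (forall A, effect A -> S (compl_op A) = S A) /\
  (* S5 *) (forall A C D, effect A -> invertible_bounded C D ->
               effect (C \o A \o D) -> S (C \o A \o D) = S A) /\
  (* S6 *) (forall A, effect A -> forall e : R, 0 < e -> exists2 d : R, 0 < d &
               forall B, effect B -> opnorm (sub_op A B) < d ->
                 `|S A - S B| < e).

Definition S1 (A : H -> H) : R :=
  (opnorm A + opnorm (compl_op A) - 1)
  - (opnorm (A \o compl_op A) + opnorm (compl_op (A \o compl_op A)) - 1).

End Hilbert.

(* Put [M = N A] and [m = 1 - N (I - A)]. For an effect [A] on [H <> 0] the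
   quadratic form of [A] lies between [m] and [M], with [m <= M]; hence that of
   [B = A (I - A)] lies between the minimum and the maximum of [t - t ^+ 2] on
   [[m, M]], so that [(M - m) - (max - min) <= S1 A <= M - m]. Since
   [t - t ^+ 2] is 1-Lipschitz on [[0, 1]] and not affine, [max - min <= M - m]
   with equality only when [m = M]: this gives (S1) and (S2). [S1 A = 1] forces
   [N A = N (I - A) = 1] and then [N B = 0], i.e. [A] is idempotent (S3). (S4)
   is the symmetry of the formula under [A <-> I - A]. For (S5), the norm of a
   self-adjoint operator is its spectral radius: [N T ^+ (2 ^ k) <= N (T ^ (2 ^ k))],
   while conjugation by [C] costs only the constant factor [N C * N D] on every
   power. (S6) holds because [S1] is 8-Lipschitz for the operator norm. *)

From mathcomp Require Import all_boot all_order all_algebra.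
From mathcomp Require Import boolp classical_sets reals.
From mathcomp Require Import complex.
From mathcomp Require Import ring lra.
Set Implicit Arguments. Unset Strict Implicit. Unset Printing Implicit Defensive.
Import Order.TTheory GRing.Theory Num.Theory.
Local Open Scope ring_scope.
Local Open Scope classical_set_scope.

Section Parabola.
Variable R : realFieldType.

Definition parab (t : R) := t - t ^+ 2.

Definition parab_max (m M : R) :=
  if M <= 2^-1 then parab M else if 2^-1 <= m then parab m else 4^-1.

Definition parab_min (m M : R) := Num.min (parab m) (parab M).

Lemma parab_le_max m M t : m <= t <= M -> parab t <= parab_max m M.
Proof.
move=> /andP[mt tM]; rewrite /parab_max /parab.
case: ifP => [hM|_]; first nra.
case: ifP => [hm|_]; first nra.
have := sqr_ge0 (t - 2^-1); nra.
Qed.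

Lemma parab_max_le1 m M : 0 <= m -> m <= M -> M <= 1 -> parab_max m M <= 1.
Proof.
move=> m0 mM M1; rewrite /parab_max /parab.
by case: ifP => _; [nra|case: ifP => _; [nra|lra]].
Qed.

Lemma parab_min_ge0 m M : 0 <= m -> m <= M -> M <= 1 -> 0 <= parab_min m M.
Proof. by move=> m0 mM M1; rewrite le_min /parab; apply/andP; split; nra. Qed.

Lemma parab_min_le_max m M : m <= M -> parab_min m M <= parab_max m M.
Proof.
move=> mM; apply: le_trans (parab_le_max (t := m) _); last by rewrite lexx mM.
by rewrite ge_min lexx.
Qed.

(* The affine function of [tau] below interpolates [parab] at [tau = m rho]
   and [tau = M rho]. *)
Lemma parab_min_le_affine m M rho tau : 0 <= rho ->
  m * rho <= tau -> tau <= M * rho ->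
  parab_min m M * rho <= (1 - m - M) * tau + m * M * rho.
Proof.
move=> rho0 mtau tauM.
have lem : parab_min m M <= parab m by rewrite ge_min lexx.
have leM : parab_min m M <= parab M by rewrite ge_min lexx orbT.
have [slope0|slope0] := lerP 0 (1 - m - M).
  apply: le_trans (_ : parab m * rho <= _); first by rewrite ler_wpM2r.
  rewrite /parab; nra.
apply: le_trans (_ : parab M * rho <= _); first by rewrite ler_wpM2r.
rewrite /parab; nra.
Qed.

Lemma parab_gap_lt m M : 0 <= m -> m < M -> M <= 1 ->
  parab_max m M - parab_min m M < M - m.
Proof.
move=> m0 mM M1; rewrite /parab_min /parab_max minEle /parab.
by case: (lerP (m - m ^+ 2) (M - M ^+ 2)) => ?; case: (lerP M 2^-1) => ?;
  case: (lerP 2^-1 m) => ?; nra.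
Qed.

Lemma parab_gap_le m M : 0 <= m -> m <= M -> M <= 1 ->
  parab_max m M - parab_min m M <= M - m.
Proof.
move=> m0; rewrite le_eqVlt => /predU1P[<- _|mM M1]; last exact/ltW/parab_gap_lt.
have -> : parab_max m m = parab m.
  by rewrite /parab_max; case: ifP => // /negbT; rewrite -ltNge => /ltW ->.
by rewrite /parab_min minxx !subrr.
Qed.

End Parabola.

Lemma bernoulli_ineq (R : realDomainType) (h : R) n :
  0 <= h -> 1 + n%:R * h <= (1 + h) ^+ n.
Proof.
move=> h0; elim: n => [|n IH]; first by rewrite mul0r addr0 expr0.
rewrite exprS -natr1; have : 0 <= n%:R * h by rewrite mulr_ge0.
nra.
Qed.

(* The ratio [x / y] would otherwise grow at least linearly along the powers
   [2 ^ k], by Bernoulli's inequality. *)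
Lemma le_of_expn2_bounded (R : archiRealFieldType) (x y K : R) :
  0 <= x -> 0 <= y -> 0 <= K ->
  (forall k, x ^+ (2 ^ k) <= K * y ^+ (2 ^ k)) -> x <= y.
Proof.
move=> x0 y0 K0 hxy; rewrite leNgt; apply/negP => yx.
have [y_eq0|y_neq0] := eqVneq y 0.
  by move: (hxy 0%N) yx; rewrite expn0 !expr1 y_eq0 mulr0; lra.
have y_gt0 : 0 < y by rewrite lt_def y_neq0 y0.
set r := x / y.
have r_gt1 : 1 < r by rewrite /r ltr_pdivlMr // mul1r.
have r1_gt0 : 0 < r - 1 by rewrite subr_gt0.
have rK k : r ^+ (2 ^ k) <= K.
  by rewrite -(ler_pM2r (exprn_gt0 (2 ^ k) y_gt0)) -exprMn /r divfK ?hxy.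
set n := Num.Def.archi_bound (K / (r - 1)).
have := archi_boundP (divr_ge0 K0 (ltW r1_gt0)); rewrite -/n.
rewrite -(ltr_pM2r r1_gt0) divfK ?gt_eqF // => Kn.
have n_lt : (n < 2 ^ n)%N by apply: ltn_expl.
have := bernoulli_ineq (2 ^ n) (ltW r1_gt0); rewrite [1 + (r - 1)]addrC subrK.
have : n%:R * (r - 1) <= (2 ^ n)%:R * (r - 1) by rewrite ler_pM2r // ler_nat ltnW.
have := rK n; lra.
Qed.

Section ComplexRe.
Variable R : rcfType.

Lemma ReD (a b : R[i]) : complex.Re (a + b) = complex.Re a + complex.Re b.
Proof. by case: a; case: b. Qed.
Lemma ReN (a : R[i]) : complex.Re (- a) = - complex.Re a. Proof. by case: a. Qed.
Lemma ReMC (t : R) (a : R[i]) : complex.Re ((t%:C)%C * a) = t * complex.Re a.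
Proof. by case: a => u v /=; rewrite mul0r subr0. Qed.
Lemma ReJ (a : R[i]) : complex.Re (a^*)%C = complex.Re a. Proof. by case: a. Qed.

End ComplexRe.

Lemma CauchySchwarz_form (R : rcfType) (H : lmodType R[i]) (b : H -> H -> R) :
  (forall x y z, b (x + y) z = b x z + b y z) ->
  (forall (t : R) x z, b ((t%:C)%C *: x) z = t * b x z) ->
  (forall x y, b x y = b y x) -> (forall x, 0 <= b x x) ->
  forall x y, b x y ^+ 2 <= b x x * b y y.
Proof.
move=> bDl bZl bC b_ge0 x y.
have bDr u v w : b w (u + v) = b w u + b w v by rewrite bC bDl !(bC w).
have bZr t u w : b w ((t%:C)%C *: u) = t * b w u by rewrite bC bZl bC.
have bE t : b (x + (t%:C)%C *: y) (x + (t%:C)%C *: y) =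
            b x x + 2 * t * b x y + t ^+ 2 * b y y.
  by rewrite bDl !bDr !bZl !bZr (bC y x); ring.
have [yy_gt0|yy_le0] := ltrP 0 (b y y).
  have := b_ge0 (x + ((- (b x y / b y y))%:C)%C *: y); rewrite bE.
  have : - (b x y / b y y) * b y y = - b x y by rewrite mulNr divfK // gt_eqF.
  nra.
have yy0 : b y y = 0 by apply/eqP; rewrite eq_le yy_le0 b_ge0.
rewrite yy0 mulr0; have [->|xy_neq0] := eqVneq (b x y) 0; first by rewrite expr0n.
(* with [b y y = 0] the quadratic in [t] is affine, hence not bounded below *)
have := b_ge0 (x + ((- ((b x x + 1) / (2 * b x y)))%:C)%C *: y).
rewrite bE yy0 mulr0 addr0.
have -> : 2 * - ((b x x + 1) / (2 * b x y)) * b x y = - (b x x + 1).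
  by field; rewrite xy_neq0.
have := b_ge0 x; lra.
Qed.

(** * Inner product and operator norm *)

Section Operators.
Variables (R : realType) (H : lmodType R[i]) (ip : H -> H -> R[i]).
Hypothesis Hip : is_inner_product ip.

Local Notation rip x y := (complex.Re (ip x y)).
Local Notation sc t x := (((t%:C)%C : R[i]) *: x).
Local Notation hn := (hnorm ip).
Local Notation N := (opnorm ip).
Implicit Types (A B C D S T : H -> H) (x y z : H).

Lemma ipDl x y z : ip (x + y) z = ip x z + ip y z.
Proof. by case: Hip => /(_ 1 x y z); rewrite scale1r mul1r. Qed.

Lemma ip0l z : ip 0 z = 0.
Proof. by apply/(addrI (ip 0 z)); rewrite -ipDl !addr0. Qed.

Lemma ipZl a x z : ip (a *: x) z = a * ip x z.
Proof. by case: Hip => /(_ a x 0 z); rewrite addr0 ip0l addr0. Qed.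

Lemma ripDl x y z : rip (x + y) z = rip x z + rip y z.
Proof. by rewrite ipDl ReD. Qed.
Lemma ripZl t x z : rip (sc t x) z = t * rip x z.
Proof. by rewrite ipZl ReMC. Qed.
Lemma ripNl x z : rip (- x) z = - rip x z.
Proof. by rewrite -scaleN1r ipZl mulN1r ReN. Qed.
Lemma ripBl x y z : rip (x - y) z = rip x z - rip y z.
Proof. by rewrite ripDl ripNl. Qed.
Lemma ripC x y : rip x y = rip y x.
Proof. by case: Hip => _ ipC _ _; rewrite ipC ReJ. Qed.
Lemma ripDr x y z : rip z (x + y) = rip z x + rip z y.
Proof. by rewrite ripC ripDl !(ripC z). Qed.
Lemma ripZr t x z : rip z (sc t x) = t * rip z x.
Proof. by rewrite ripC ripZl ripC. Qed.
Lemma ripNr x z : rip z (- x) = - rip z x.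
Proof. by rewrite ripC ripNl ripC. Qed.
Lemma ripBr x y z : rip z (x - y) = rip z x - rip z y.
Proof. by rewrite ripDr ripNr. Qed.
Lemma rip0l z : rip 0 z = 0.
Proof. by rewrite ip0l. Qed.

Lemma rip_ge0 x : 0 <= rip x x.
Proof. by case: Hip => _ _ /(_ x); rewrite lecE => /andP[]. Qed.

Lemma rip_eq0 x : rip x x = 0 -> x = 0.
Proof.
case: Hip => _ _ /(_ x) + /(_ x); rewrite lecE => /andP[/eqP Im0 _] ip_eq0 Re0.
by apply: ip_eq0; move: Re0 Im0; case: (ip x x) => u v /= -> ->.
Qed.

Lemma rip_CauchySchwarz x y : rip x y ^+ 2 <= rip x x * rip y y.
Proof. exact: CauchySchwarz_form ripDl ripZl ripC rip_ge0 x y. Qed.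

Lemma hnorm_ge0 x : 0 <= hn x.
Proof. exact: sqrtr_ge0. Qed.

Lemma sqr_hnorm x : hn x ^+ 2 = rip x x.
Proof. by rewrite /hnorm sqr_sqrtr // rip_ge0. Qed.

Lemma hnorm_le c u : 0 <= c -> rip u u <= c ^+ 2 -> hn u <= c.
Proof. by move=> c0 h; rewrite /hnorm -(ger0_norm c0) -sqrtr_sqr ler_wsqrtr. Qed.

Lemma rip_le_hnorm x y : rip x y <= hn x * hn y.
Proof.
apply: le_trans (ler_norm _) _; rewrite -sqrtr_sqr /hnorm -sqrtrM ?rip_ge0 //.
exact/ler_wsqrtr/rip_CauchySchwarz.
Qed.

Lemma hnorm0 : hn 0 = 0.
Proof. by rewrite /hnorm rip0l sqrtr0. Qed.

Lemma hnorm_eq0 x : hn x = 0 -> x = 0.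
Proof. by move=> h; apply: rip_eq0; rewrite -sqr_hnorm h expr0n. Qed.

Lemma hnormZ t x : hn (sc t x) = `|t| * hn x.
Proof. by rewrite /hnorm ripZl ripZr mulrA -expr2 sqrtrM ?sqr_ge0 // sqrtr_sqr. Qed.

Lemma hnormN x : hn (- x) = hn x.
Proof. by rewrite /hnorm ripNl ripNr opprK. Qed.

Lemma hnormD x y : hn (x + y) <= hn x + hn y.
Proof.
apply: hnorm_le; first by rewrite addr_ge0 ?hnorm_ge0.
rewrite ripDl !ripDr -!sqr_hnorm (ripC y x).
have := rip_le_hnorm x y; have := hnorm_ge0 x; have := hnorm_ge0 y; nra.
Qed.

Lemma hnormB x y : hn (x - y) <= hn x + hn y.
Proof. by rewrite -(hnormN y) hnormD. Qed.

Lemma exists_unit_or_trivial : (exists e, rip e e = 1) \/ (forall x : H, x = 0).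
Proof.
have [[x x_neq0]|triv] := pselect (exists x : H, x <> 0); last first.
  by right=> x; apply: contrapT => x_neq0; apply: triv; exists x.
have x_gt0 : 0 < hn x.
  by rewrite lt_def hnorm_ge0 andbT; apply/eqP => /hnorm_eq0.
left; exists (sc (hn x)^-1 x).
by rewrite -sqr_hnorm hnormZ ger0_norm ?invr_ge0 ?hnorm_ge0 // mulVf ?gt_eqF ?expr1n.
Qed.

Lemma linopD {T} : is_linear_op T -> forall x y, T (x + y) = T x + T y.
Proof. by move=> T_lin x y; rewrite -[x]scale1r T_lin !scale1r. Qed.

Lemma linop0 {T} : is_linear_op T -> T 0 = 0.
Proof. by move=> T_lin; apply/(addrI (T 0)); rewrite -(linopD T_lin) !addr0. Qed.

Lemma linopZ {T} : is_linear_op T -> forall a x, T (a *: x) = a *: T x.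
Proof. by move=> T_lin a x; rewrite -[_ *: x]addr0 T_lin (linop0 T_lin) addr0. Qed.

Lemma linopN {T} : is_linear_op T -> forall x, T (- x) = - T x.
Proof. by move=> T_lin x; rewrite -scaleN1r (linopZ T_lin) scaleN1r. Qed.

Lemma linopB {T} : is_linear_op T -> forall x y, T (x - y) = T x - T y.
Proof. by move=> T_lin x y; rewrite (linopD T_lin) (linopN T_lin). Qed.

Lemma linop_compl A : is_linear_op A -> is_linear_op (compl_op A).
Proof. by move=> A_lin a x y; rewrite /compl_op A_lin scalerBr opprD addrACA. Qed.

Lemma linop_comp A B : is_linear_op A -> is_linear_op B -> is_linear_op (A \o B).
Proof. by move=> A_lin B_lin a x y /=; rewrite B_lin A_lin. Qed.

Lemma linop_iter T n : is_linear_op T -> is_linear_op (iter n T).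
Proof. by move=> T_lin; elim: n => [|n IHn] a x y //=; rewrite IHn T_lin. Qed.

Definition re_selfadjoint (T : H -> H) := forall x y, rip (T x) y = rip x (T y).

Lemma selfadjoint_re T : selfadjoint ip T -> re_selfadjoint T.
Proof. by case=> _ T_sa x y; rewrite T_sa. Qed.

Lemma re_selfadjoint_compl A :
  is_linear_op A -> re_selfadjoint A -> re_selfadjoint (compl_op A).
Proof. by move=> A_lin A_sa x y; rewrite /compl_op ripBl ripBr A_sa. Qed.

Lemma re_selfadjoint_comp_compl A :
  is_linear_op A -> re_selfadjoint A -> re_selfadjoint (A \o compl_op A).
Proof.
by move=> A_lin A_sa x y; rewrite /compl_op /= !(linopB A_lin) ripBl ripBr !A_sa.
Qed.

Lemma opnorm_le T c : 0 <= c -> (forall x, hn (T x) <= c * hn x) -> N T <= c.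
Proof.
move=> c0 Tc; apply: ge_sup; first by exists (hn (T 0)), 0; rewrite //= hnorm0.
move=> _ [x /= x_le1 <-]; apply: le_trans (Tc x) _.
by rewrite -[leRHS]mulr1 ler_wpM2l.
Qed.

Lemma bounded_has_ubound T : is_bounded_op ip T ->
  has_ubound [set hn (T x) | x in [set x | hn x <= 1]].
Proof.
case=> _ [c Tc]; exists `|c| => _ [x /= x_le1 <-]; apply: le_trans (Tc x) _.
have := hnorm_ge0 x; have := ler_norm c; have := normr_ge0 c; nra.
Qed.

Lemma opnorm_ge0 T : is_bounded_op ip T -> 0 <= N T.
Proof.
move=> T_bd; apply: le_trans (hnorm_ge0 (T 0)) _.
by apply: (ub_le_sup (bounded_has_ubound T_bd)); exists 0; rewrite //= hnorm0.
Qed.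

Lemma hnorm_op_le T : is_bounded_op ip T -> forall x, hn (T x) <= N T * hn x.
Proof.
move=> T_bd x; have [/hnorm_eq0 ->|x_neq0] := eqVneq (hn x) 0.
  by rewrite (linop0 T_bd.1) hnorm0 mulr0.
have x_gt0 : 0 < hn x by rewrite lt_def x_neq0 hnorm_ge0.
have unit_x : hn (sc (hn x)^-1 x) <= 1.
  by rewrite hnormZ ger0_norm ?invr_ge0 ?hnorm_ge0 // mulVf.
have := ub_le_sup (bounded_has_ubound T_bd) (ex_intro2 _ _ (sc (hn x)^-1 x) unit_x erefl).
rewrite -/(opnorm ip T) (linopZ T_bd.1).
by rewrite hnormZ ger0_norm ?invr_ge0 ?hnorm_ge0 // -ler_pdivrMr // mulrC.
Qed.

Lemma opnorm_ge1_fixed T z : is_bounded_op ip T -> z <> 0 -> T z = z -> 1 <= N T.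
Proof.
move=> T_bd z_neq0 Tz; have := hnorm_op_le T_bd z; rewrite Tz -[X in X <= _]mul1r.
by rewrite ler_pM2r // lt_def hnorm_ge0 andbT; apply/eqP => /hnorm_eq0.
Qed.

Lemma quad_le_opnorm T : is_bounded_op ip T -> forall x, rip (T x) x <= N T * rip x x.
Proof.
move=> T_bd x; apply: le_trans (rip_le_hnorm _ _) _.
by rewrite -sqr_hnorm expr2 mulrA ler_wpM2r ?hnorm_ge0 ?hnorm_op_le.
Qed.

Lemma opnorm_trivial T : (forall x : H, x = 0) -> N T = 0.
Proof.
move=> triv; apply/le_anti; rewrite opnorm_le //=; last first.
  by move=> x; rewrite (triv (T x)) hnorm0 mul0r.
apply: opnorm_ge0; split; first by move=> a x y; rewrite (triv (T _)) (triv (_ + _)).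
by exists 0 => x; rewrite (triv (T x)) hnorm0 mul0r.
Qed.

Lemma bounded_comp S T : is_bounded_op ip S -> is_bounded_op ip T ->
  is_bounded_op ip (S \o T).
Proof.
move=> S_bd T_bd; split; first exact: linop_comp S_bd.1 T_bd.1.
exists (N S * N T) => x /=; apply: le_trans (hnorm_op_le S_bd (T x)) _.
by rewrite -mulrA ler_wpM2l ?opnorm_ge0 ?hnorm_op_le.
Qed.

Lemma bounded_compl T : is_bounded_op ip T -> is_bounded_op ip (compl_op T).
Proof.
move=> T_bd; split; first exact: linop_compl T_bd.1.
exists (1 + N T) => x; rewrite /compl_op mulrDl mul1r.
by apply: le_trans (hnormB x (T x)) _; rewrite lerD2l hnorm_op_le.
Qed.

Lemma hnorm_iter_le T n : is_bounded_op ip T ->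
  forall x, hn (iter n T x) <= N T ^+ n * hn x.
Proof.
move=> T_bd; elim: n => [|n IHn] x; first by rewrite expr0 mul1r.
rewrite /= exprS -mulrA; apply: le_trans (hnorm_op_le T_bd _) _.
by rewrite ler_wpM2l ?opnorm_ge0.
Qed.

Lemma bounded_iter T n : is_bounded_op ip T -> is_bounded_op ip (iter n T).
Proof.
move=> T_bd; split; first exact: linop_iter T_bd.1.
by exists (N T ^+ n); apply: hnorm_iter_le.
Qed.

Lemma bounded_sub S T : is_bounded_op ip S -> is_bounded_op ip T ->
  is_bounded_op ip (sub_op S T).
Proof.
move=> S_bd T_bd; split.
  by move=> a x y; rewrite /sub_op S_bd.1 T_bd.1 scalerBr opprD addrACA.
exists (N S + N T) => x; rewrite /sub_op mulrDl.
by apply: le_trans (hnormB _ _) _; rewrite lerD ?hnorm_op_le.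
Qed.

Definition hermitian T := is_bounded_op ip T /\ re_selfadjoint T.

Lemma effect_hermitian A : effect ip A -> hermitian A.
Proof. by case=> A_sa _; split; [case: A_sa | exact: selfadjoint_re]. Qed.

Lemma hermitian_compl A : hermitian A -> hermitian (compl_op A).
Proof.
by case=> A_bd A_sa; split; [exact: bounded_compl | exact: re_selfadjoint_compl A_bd.1 A_sa].
Qed.

Lemma hermitian_comp_compl A : hermitian A -> hermitian (A \o compl_op A).
Proof.
case=> A_bd A_sa; split; first exact/bounded_comp/bounded_compl.
exact: re_selfadjoint_comp_compl A_bd.1 A_sa.
Qed.

Lemma hermitian_iter T n : hermitian T -> hermitian (iter n T).
Proof.
case=> T_bd T_sa; split; first exact: bounded_iter.
by elim: n => [|n IHn] x y //=; rewrite T_sa IHn -iterSr.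
Qed.

Lemma opnorm_lipschitz T1 T2 c : is_bounded_op ip T1 -> is_bounded_op ip T2 ->
  0 <= c -> (forall x, hn (T1 x - T2 x) <= c * hn x) -> `|N T1 - N T2| <= c.
Proof.
move=> T1_bd T2_bd c0 T12c.
have le_add Ta Tb : is_bounded_op ip Ta -> is_bounded_op ip Tb ->
    (forall x, hn (Ta x - Tb x) <= c * hn x) -> N Ta <= N Tb + c.
  move=> Ta_bd Tb_bd Tabc; apply: opnorm_le; first by rewrite addr_ge0 ?opnorm_ge0.
  move=> x; rewrite -[Ta x](subrK (Tb x)) addrC mulrDl.
  by apply: le_trans (hnormD _ _) _; rewrite lerD ?hnorm_op_le.
have T21c x : hn (T2 x - T1 x) <= c * hn x by rewrite -hnormN opprB.
have := le_add _ _ T1_bd T2_bd T12c; have := le_add _ _ T2_bd T1_bd T21c.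
by rewrite ler_norml => ? ?; apply/andP; split; lra.
Qed.

(** * Positive operators *)

Definition posop T (c : R) :=
  [/\ is_linear_op T, re_selfadjoint T, 0 <= c &
      forall x, 0 <= rip (T x) x <= c * rip x x].

Lemma posop_sqr_le T c : posop T c -> forall x, rip (T x) (T x) <= c * rip (T x) x.
Proof.
case=> T_lin T_sa c0 Tc x.
have CS := CauchySchwarz_form (b := fun u v => rip (T u) v).
have := CS (fun u v w => ltac:(by rewrite (linopD T_lin) ripDl))
           (fun t u w => ltac:(by rewrite (linopZ T_lin) ripZl))
           (fun u v => ltac:(by rewrite T_sa ripC))
           (fun u => (andP (Tc u)).1) x (T x).
have /andP[q0 _] := Tc x; have /andP[_ qTc] := Tc (T x).
have := rip_ge0 (T x).
set s := rip (T x) (T x); set q := rip (T x) x => s0 CSx.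
have : s ^+ 2 <= q * (c * s) by apply: le_trans CSx _; rewrite ler_wpM2l.
have : 0 <= c * q by rewrite mulr_ge0.
nra.
Qed.

Lemma posop_hnorm_le T c : posop T c -> forall x, hn (T x) <= c * hn x.
Proof.
move=> T_pos x; have [_ _ c0 Tc] := T_pos.
apply: hnorm_le; first by rewrite mulr_ge0 ?hnorm_ge0.
rewrite exprMn sqr_hnorm; apply: le_trans (posop_sqr_le T_pos x) _.
by have /andP[_ qc] := Tc x; rewrite expr2 -mulrA ler_wpM2l.
Qed.

Lemma posop_bounded T c : posop T c -> is_bounded_op ip T.
Proof. by move=> T_pos; split; [case: T_pos | exists c; exact: posop_hnorm_le]. Qed.

Lemma posop_opnorm_le T c : posop T c -> N T <= c.
Proof. by move=> T_pos; apply: opnorm_le (posop_hnorm_le T_pos); case: T_pos. Qed.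

Lemma posop_le T c c' : posop T c -> 0 <= c' ->
  (forall x, rip (T x) x <= c' * rip x x) -> posop T c'.
Proof.
by case=> T_lin T_sa _ Tc c'0 Tc'; split=> // x; rewrite Tc' andbT; case/andP: (Tc x).
Qed.

Lemma posop_compl A : posop A 1 -> posop (compl_op A) 1.
Proof.
case=> A_lin A_sa _ A1; split; rewrite ?ler01 //.
- exact: linop_compl.
- exact: re_selfadjoint_compl.
- move=> x; rewrite /compl_op ripBl mul1r.
  by have /andP[] := A1 x; rewrite mul1r => ? ?; apply/andP; split; lra.
Qed.

Lemma posop_shift T m M : is_linear_op T -> re_selfadjoint T -> m <= M ->
  (forall x, m * rip x x <= rip (T x) x <= M * rip x x) ->
  posop (fun x => T x - sc m x) (M - m).
Proof.
move=> T_lin T_sa mM TmM; split; rewrite ?subr_ge0 //.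
- move=> a x y; rewrite T_lin scalerDr scalerBr !scalerA mulrC.
  by rewrite opprD addrACA.
- by move=> x y; rewrite ripBl ripBr ripZl ripZr T_sa.
- move=> x; rewrite ripBl ripZl.
  by have /andP[? ?] := TmM x; apply/andP; split; lra.
Qed.

Lemma effect_posop A : effect ip A -> posop A 1.
Proof.
case=> A_sa [A_ge0 A_le1]; split; rewrite ?ler01 //.
- by case: A_sa => [[]].
- exact: selfadjoint_re.
- by move=> x; move: (A_ge0 x) (A_le1 x); rewrite mul1r !lecE => /andP[_ ->] /andP[_ ->].
Qed.

(** * Similar self-adjoint operators have the same norm *)

(* [hn (T x) ^+ 2 = rip (T (T x)) x] for self-adjoint [T]. *)
Lemma opnorm_sqr_le T : hermitian T -> N T ^+ 2 <= N (T \o T).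
Proof.
move=> [T_bd T_sa]; have TT_bd := bounded_comp T_bd T_bd.
have TT_ge0 := opnorm_ge0 TT_bd; have T_ge0 := opnorm_ge0 T_bd.
have : N T <= Num.sqrt (N (T \o T)).
  apply: opnorm_le; first exact: sqrtr_ge0.
  move=> x; apply: hnorm_le; first by rewrite mulr_ge0 ?sqrtr_ge0 ?hnorm_ge0.
  rewrite exprMn sqr_sqrtr // sqr_hnorm -T_sa.
  exact: quad_le_opnorm TT_bd x.
by move=> le_sqrt; rewrite -(sqr_sqrtr TT_ge0) ler_pXn2r ?nnegrE ?sqrtr_ge0.
Qed.

Lemma opnorm_expn2_le T : hermitian T ->
  forall k, N T ^+ (2 ^ k) <= N (iter (2 ^ k) T).
Proof.
move=> T_h; elim=> [|k IHk]; first by rewrite expn0 expr1.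
have -> : iter (2 ^ k.+1) T = iter (2 ^ k) T \o iter (2 ^ k) T.
  by apply: funext => x /=; rewrite expnS mul2n -addnn iterD.
rewrite expnS mulnC exprM.
apply: le_trans (opnorm_sqr_le (hermitian_iter _ T_h)).
apply: lerXn2r => //; rewrite nnegrE; last exact/opnorm_ge0/(hermitian_iter _ T_h).1.
by rewrite exprn_ge0 // (opnorm_ge0 T_h.1).
Qed.

Lemma invertible_bounded_sym C D : invertible_bounded ip C D -> invertible_bounded ip D C.
Proof. by case. Qed.

(* The powers of [T'] are the conjugates of those of [T], so
   [N T' ^+ (2 ^ k) <= N C * N D * N T ^+ (2 ^ k)] for all [k]. *)
Lemma opnorm_similar_le T T' C D : hermitian T -> hermitian T' ->
  invertible_bounded ip C D -> (forall x, T' x = C (T (D x))) -> N T' <= N T.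
Proof.
move=> [T_bd _] T'_h [C_bd D_bd CD DC] T'E.
have iterE n x : iter n T' x = C (iter n T (D x)).
  by elim: n x => [|n IHn] x /=; rewrite ?CD // IHn T'E DC.
have C_ge0 := opnorm_ge0 C_bd; have D_ge0 := opnorm_ge0 D_bd.
apply: (le_of_expn2_bounded (K := N C * N D));
  rewrite ?mulr_ge0 ?(opnorm_ge0 T_bd) ?(opnorm_ge0 T'_h.1) //.
move=> k; apply: le_trans (opnorm_expn2_le T'_h k) _.
apply: opnorm_le; first by rewrite !mulr_ge0 ?exprn_ge0 ?opnorm_ge0.
move=> x; rewrite iterE; apply: le_trans (hnorm_op_le C_bd _) _.
rewrite -!mulrA ler_wpM2l // mulrCA.
apply: le_trans (hnorm_iter_le _ T_bd _) _.
by rewrite ler_wpM2l ?exprn_ge0 ?opnorm_ge0 ?hnorm_op_le.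
Qed.

Lemma opnorm_similar T T' C D : hermitian T -> hermitian T' ->
  invertible_bounded ip C D -> (forall x, T' x = C (T (D x))) -> N T' = N T.
Proof.
move=> T_h T'_h CD_inv T'E; apply/le_anti.
rewrite (opnorm_similar_le T_h T'_h CD_inv T'E).
apply: opnorm_similar_le (invertible_bounded_sym CD_inv) _ => //.
by case: CD_inv => _ _ _ DC x; rewrite T'E !DC.
Qed.

(** * The sharpness measure [S1] *)

Section NumericalRange.
Variables (A : H -> H) (e : H).
Hypotheses (A_pos : posop A 1) (e_unit : rip e e = 1).

Local Notation M := (N A).
Local Notation m := (1 - N (compl_op A)).
Local Notation B := (A \o compl_op A).

Let A_lin : is_linear_op A. Proof. by case: A_pos. Qed.
Let A_sa : re_selfadjoint A. Proof. by case: A_pos. Qed.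
Let A_bd : is_bounded_op ip A. Proof. exact: posop_bounded A_pos. Qed.

Let quad_ub x : rip (A x) x <= M * rip x x.
Proof. exact: quad_le_opnorm A_bd x. Qed.

Let quad_lb x : m * rip x x <= rip (A x) x.
Proof.
have := quad_le_opnorm (posop_bounded (posop_compl A_pos)) x.
by rewrite /compl_op ripBl mulrBl mul1r; lra.
Qed.

Let opnorm_le1 : M <= 1. Proof. exact: posop_opnorm_le A_pos. Qed.

Let lb_ge0 : 0 <= m.
Proof. by rewrite subr_ge0; exact: posop_opnorm_le (posop_compl A_pos). Qed.

Let lb_le_ub : m <= M.
Proof.
by have := quad_lb e; have := quad_ub e; rewrite e_unit !mulr1 => ub lb; exact: le_trans lb ub.
Qed.

Let quad_comp_compl x : rip (B x) x = rip (A x) x - rip (A x) (A x).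
Proof. by rewrite /compl_op /= (linopB A_lin) ripBl (A_sa (A x) x). Qed.

Lemma quad_comp_compl_ub x : rip (B x) x <= parab_max m M * rip x x.
Proof.
rewrite quad_comp_compl; have CS := rip_CauchySchwarz (A x) x.
have s_ge0 := rip_ge0 (A x); have rho_ge0 := rip_ge0 x.
have tau_lb := quad_lb x; have tau_ub := quad_ub x.
set tau := rip (A x) x in CS tau_lb tau_ub *.
set s := rip (A x) (A x) in s_ge0 CS *.
set rho := rip x x in rho_ge0 CS tau_lb tau_ub *.
have [rho0|rho_neq0] := eqVneq rho 0; first by rewrite rho0 mulr0 in CS *; nra.
have rho_gt0 : 0 < rho by rewrite lt_def rho_neq0.
(* with [u = tau / rho], Cauchy-Schwarz gives [tau - s <= parab u * rho] *)
set u := tau / rho; have tauE : tau = u * rho by rewrite divfK.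
rewrite tauE in CS tau_lb tau_ub *.
rewrite ler_pM2r // in tau_lb; rewrite ler_pM2r // in tau_ub.
have := parab_le_max (t := u) (m := m) (M := M); rewrite tau_lb tau_ub /parab.
move=> /(_ isT) pmax.
have : u ^+ 2 * rho <= s by rewrite -(ler_pM2r rho_gt0) -mulrA -expr2 -exprMn.
nra.
Qed.

Lemma quad_comp_compl_lb x : parab_min m M * rip x x <= rip (B x) x.
Proof.
have := posop_sqr_le (posop_shift A_lin A_sa lb_le_ub
  (fun x => ltac:(by rewrite quad_lb quad_ub))) x.
rewrite /= !ripBl !ripBr !ripZl !ripZr (ripC x (A x)) quad_comp_compl.
have := parab_min_le_affine (rip_ge0 x) (quad_lb x) (quad_ub x).
nra.
Qed.

Let pmin_ge0 : 0 <= parab_min m M.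
Proof. by rewrite parab_min_ge0 ?lb_ge0 ?lb_le_ub ?opnorm_le1. Qed.

Let pmax_le1 : parab_max m M <= 1.
Proof. by rewrite parab_max_le1 ?lb_ge0 ?lb_le_ub ?opnorm_le1. Qed.

Lemma posop_comp_compl : posop B (parab_max m M).
Proof.
split.
- exact/linop_comp/linop_compl.
- exact: re_selfadjoint_comp_compl.
- exact: le_trans pmin_ge0 (parab_min_le_max lb_le_ub).
- move=> x; rewrite quad_comp_compl_ub andbT.
  by apply: le_trans (quad_comp_compl_lb x); rewrite mulr_ge0 ?pmin_ge0 ?rip_ge0.
Qed.

Lemma posop_compl_comp_compl : posop (compl_op B) (1 - parab_min m M).
Proof.
split.
- exact/linop_compl/linop_comp/linop_compl.
- apply: re_selfadjoint_compl; first exact/linop_comp/linop_compl.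
  exact: re_selfadjoint_comp_compl.
- have := parab_min_le_max lb_le_ub; have := pmax_le1; lra.
- move=> x; rewrite {1 3}/compl_op ripBl.
  have := quad_comp_compl_ub x; have := quad_comp_compl_lb x.
  have := rip_ge0 x; have := pmax_le1 => /= ? ? ? ?; apply/andP; split; nra.
Qed.

Lemma S1_ge : (M - m) - (parab_max m M - parab_min m M) <= S1 ip A.
Proof.
have := posop_opnorm_le posop_comp_compl.
have := posop_opnorm_le posop_compl_comp_compl.
rewrite /S1; lra.
Qed.

(* [e] is a unit vector, so [N B + N (I - B) >= rip (B e) e + rip ((I - B) e) e = 1]. *)
Lemma S1_le : S1 ip A <= M - m.
Proof.
have := quad_le_opnorm (posop_bounded posop_comp_compl) e.
have := quad_le_opnorm (posop_bounded posop_compl_comp_compl) e.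
by rewrite /compl_op /= ripBl e_unit !mulr1 /S1; lra.
Qed.

Lemma S1_range : 0 <= S1 ip A <= 1.
Proof.
apply/andP; split.
  apply: le_trans S1_ge; rewrite subr_ge0.
  by rewrite parab_gap_le ?lb_ge0 ?lb_le_ub ?opnorm_le1.
by apply: le_trans S1_le _; have := lb_ge0; have := opnorm_le1; lra.
Qed.

Lemma S1_eq0_scalar : S1 ip A = 0 -> A = (fun x => sc M x).
Proof.
move=> S1_eq0.
have lb_eq_ub : m = M.
  apply/le_anti; rewrite lb_le_ub /= leNgt; apply/negP => lt_mM.
  have := parab_gap_lt lb_ge0 lt_mM opnorm_le1; have := S1_ge; rewrite S1_eq0; lra.
have := posop_shift A_lin A_sa lb_le_ub (fun x => ltac:(by rewrite quad_lb quad_ub)).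
rewrite lb_eq_ub subrr => shift0; apply: funext => x.
have := posop_sqr_le shift0 x; rewrite mul0r => sqr_le0.
apply/eqP; rewrite -subr_eq0; apply/eqP/rip_eq0.
by apply/le_anti; rewrite sqr_le0 rip_ge0.
Qed.

Lemma S1_scalar_le0 l : 0 <= l <= 1 -> A = (fun x => sc l x) -> S1 ip A <= 0.
Proof.
move=> /andP[l0 l1] AE.
have := posop_opnorm_le (posop_le A_pos l0 (fun x => ltac:(by rewrite AE ripZl))).
have l1' : 0 <= 1 - l by rewrite subr_ge0.
have : N (compl_op A) <= 1 - l.
  apply: posop_opnorm_le (posop_le (posop_compl A_pos) l1' _) => x.
  by rewrite /compl_op ripBl AE ripZl mulrBl mul1r.
have := S1_le; lra.
Qed.

(* [S1 A = 1] forces [N B = 0], since [N (I - A) <= N (I - B)] and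
   [N B + N (I - B) >= 1]. *)
Lemma S1_eq1_idem : S1 ip A = 1 -> A \o A = A /\ M = 1 /\ N (compl_op A) = 1.
Proof.
move=> S1_eq1; have := S1_le; have := opnorm_le1; have := lb_ge0.
move=> ? ? ?; have M1 : M = 1 by lra.
have A'1 : N (compl_op A) = 1 by lra.
have B'_bd := posop_bounded posop_compl_comp_compl.
have A'_le_B' : N (compl_op A) <= N (compl_op B).
  apply: posop_opnorm_le (posop_le (posop_compl A_pos) (opnorm_ge0 B'_bd) _) => x.
  have := quad_le_opnorm B'_bd x; rewrite /compl_op /= !ripBl quad_comp_compl.
  have := rip_ge0 (A x); lra.
have B_le0 : N B <= 0 by move: S1_eq1; rewrite /S1 M1 A'1; lra.
have B0 : posop B 0.
  apply: posop_le posop_comp_compl (lexx _) _ => x; rewrite mul0r.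
  have := quad_le_opnorm (posop_bounded posop_comp_compl) x.
  have := rip_ge0 x; nra.
split=> //; apply: funext => x /=.
have := posop_sqr_le B0 x; rewrite mul0r => Bx_le0.
have /rip_eq0/eqP : rip (B x) (B x) = 0 by apply/le_anti; rewrite Bx_le0 rip_ge0.
by rewrite /compl_op /= (linopB A_lin) subr_eq0 => /eqP.
Qed.

Lemma S1_ge1_proj : A \o A = A -> A <> @Oop R H -> A <> @Iop R H -> 1 <= S1 ip A.
Proof.
move=> AA A_neq0 A_neqI.
have AAx x : A (A x) = A x by rewrite -[in RHS]AA.
have B_le0 : N B <= 0.
  by apply: opnorm_le => // x; rewrite /compl_op /= (linopB A_lin) AAx subrr hnorm0 mul0r.
have M_ge1 : 1 <= M.
  have /existsNP[x Ax_neq0] : ~ forall x, A x = 0.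
    by move=> A0; apply: A_neq0; apply: funext.
  by apply: opnorm_ge1_fixed Ax_neq0 _; rewrite // AAx.
have A'_ge1 : 1 <= N (compl_op A).
  have /existsNP[x Ax_neqx] : ~ forall x, A x = x.
    by move=> AI; apply: A_neqI; apply: funext.
  apply: (opnorm_ge1_fixed (z := x - A x)) (bounded_compl A_bd) _ _.
    by move/eqP; rewrite subr_eq0 eq_sym => /eqP.
  by rewrite /compl_op (linopB A_lin) AAx subrr subr0.
have := posop_opnorm_le posop_compl_comp_compl; have := pmin_ge0.
rewrite /S1; lra.
Qed.

End NumericalRange.

Lemma S1_trivial A : (forall x : H, x = 0) -> S1 ip A = 0.
Proof. by move=> triv; rewrite /S1 !opnorm_trivial // subrr. Qed.

Lemma S1_range_effect A : effect ip A -> 0 <= S1 ip A <= 1.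
Proof.
move=> A_eff; have [[e e_unit]|triv] := exists_unit_or_trivial.
  exact: S1_range (effect_posop A_eff) e_unit.
by rewrite S1_trivial // lexx ler01.
Qed.

Lemma S1_eq0_trivial A : effect ip A -> S1 ip A = 0 <-> trivial_effect A.
Proof.
move=> A_eff; have A_pos := effect_posop A_eff.
have [[e e_unit]|triv] := exists_unit_or_trivial; split.
- move=> S1_eq0; exists (N A); split; last exact: S1_eq0_scalar A_pos e_unit S1_eq0.
  by rewrite (opnorm_ge0 (effect_hermitian A_eff).1) (posop_opnorm_le A_pos).
- case=> l [l01 AE]; apply/le_anti.
  by rewrite (S1_scalar_le0 A_pos e_unit l01 AE) (andP (S1_range A_pos e_unit)).1.
- move=> _; exists 0; split; first by rewrite lexx ler01.
  by apply: funext => x; rewrite (triv (A x)) (triv x) scaler0.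
- by move=> _; rewrite S1_trivial.
Qed.

Lemma S1_eq1_nontrivial_projection A : effect ip A ->
  S1 ip A = 1 <-> nontrivial_projection ip A.
Proof.
move=> A_eff; have A_pos := effect_posop A_eff.
have [[e e_unit]|triv] := exists_unit_or_trivial; split.
- move=> S1_eq1; have [AA [M1 A'1]] := S1_eq1_idem A_pos e_unit S1_eq1.
  split; first by split=> //; case: A_eff.
  have O_le0 : N (@Oop R H) <= 0 by apply: opnorm_le => // x; rewrite hnorm0 mul0r.
  split=> [A0|AI]; first by move: M1; rewrite A0; lra.
  have A'0 : compl_op A = @Oop R H by apply: funext => x; rewrite AI /compl_op subrr.
  by move: A'1; rewrite A'0; lra.
- case=> [[_ AA] [A_neq0 A_neqI]]; apply/le_anti.
  by rewrite (andP (S1_range A_pos e_unit)).2 (S1_ge1_proj A_pos e_unit).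
- by rewrite S1_trivial // => /eqP; rewrite eq_sym oner_eq0.
- by case=> _ [A_neq0 _]; exfalso; apply: A_neq0; apply: funext => x; apply: triv.
Qed.

Lemma S1_compl A : effect ip A -> S1 ip (compl_op A) = S1 ip A.
Proof.
move=> /effect_hermitian[[A_lin _] _]; rewrite /S1.
have -> : compl_op (compl_op A) = A by apply: funext => x; rewrite /compl_op subKr.
have -> : compl_op A \o A = A \o compl_op A.
  by apply: funext => x; rewrite /compl_op /= (linopB A_lin).
lra.
Qed.

Lemma compl_similar T T' C D : is_linear_op C -> (forall x, C (D x) = x) ->
  (forall x, T' x = C (T (D x))) -> forall x, compl_op T' x = C (compl_op T (D x)).
Proof. by move=> C_lin CD T'E x; rewrite /compl_op T'E (linopB C_lin) CD. Qed.

Lemma comp_compl_similar T T' C D : is_linear_op D -> (forall x, D (C x) = x) ->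
  (forall x, T' x = C (T (D x))) ->
  forall x, (T' \o compl_op T') x = C ((T \o compl_op T) (D x)).
Proof. by move=> D_lin DC T'E x; rewrite /compl_op /= !T'E (linopB D_lin) DC. Qed.

Lemma S1_similar A C D : effect ip A -> invertible_bounded ip C D ->
  effect ip (C \o A \o D) -> S1 ip (C \o A \o D) = S1 ip A.
Proof.
move=> /effect_hermitian A_h CD_inv /effect_hermitian A'_h.
have [[C_lin _] [D_lin _] CD DC] := CD_inv.
have A'E x : (C \o A \o D) x = C (A (D x)) by [].
have B'E := comp_compl_similar D_lin DC A'E.
rewrite /S1 (opnorm_similar A_h A'_h CD_inv A'E).
rewrite (opnorm_similar (hermitian_compl A_h) (hermitian_compl A'_h) CD_inv
  (compl_similar C_lin CD A'E)).
rewrite (opnorm_similar (hermitian_comp_compl A_h) (hermitian_comp_compl A'_h) CD_inv B'E).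
by rewrite (opnorm_similar (hermitian_compl (hermitian_comp_compl A_h))
  (hermitian_compl (hermitian_comp_compl A'_h)) CD_inv (compl_similar C_lin CD B'E)).
Qed.

(* [A (I - A) - B (I - B) = (A - B) - A (A - B) - (A - B) B], and [N A, N B <= 1]. *)
Lemma comp_compl_sub_le A B : effect ip A -> effect ip B -> forall x,
  hn ((A \o compl_op A) x - (B \o compl_op B) x) <= 3 * N (sub_op A B) * hn x.
Proof.
move=> A_eff B_eff x; have [A_bd _] := effect_hermitian A_eff.
have [B_bd _] := effect_hermitian B_eff.
have AB_bd := bounded_sub A_bd B_bd; set d := N (sub_op A B).
have d_ge0 : 0 <= d := opnorm_ge0 AB_bd.
have ABx y : hn (A y - B y) <= d * hn y := hnorm_op_le AB_bd y.
have A_le1 := posop_opnorm_le (effect_posop A_eff).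
have B_le1 := posop_opnorm_le (effect_posop B_eff).
have -> : (A \o compl_op A) x - (B \o compl_op B) x =
          (A x - B x) - (A (A x - B x) + (A (B x) - B (B x))).
  rewrite /compl_op /= !(linopB A_bd.1) (linopB B_bd.1) subrKA.
  by rewrite !opprB addrACA [RHS]addrACA (addrC (- A (A x))).
apply: le_trans (hnormB _ _) _; apply: le_trans (lerD (ABx x) (hnormD _ _)) _.
have AAB : hn (A (A x - B x)) <= d * hn x.
  apply: le_trans (hnorm_op_le A_bd _) _; rewrite -[leRHS]mul1r.
  by apply: ler_pM; rewrite ?opnorm_ge0 ?hnorm_ge0.
have ABB : hn (A (B x) - B (B x)) <= d * hn x.
  apply: le_trans (ABx _) _; rewrite ler_wpM2l //.
  by apply: le_trans (hnorm_op_le B_bd x) _; rewrite ler_piMl ?hnorm_ge0.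
lra.
Qed.

Lemma S1_lipschitz A B : effect ip A -> effect ip B ->
  `|S1 ip A - S1 ip B| <= 8 * N (sub_op A B).
Proof.
move=> A_eff B_eff; have [A_bd _] := effect_hermitian A_eff.
have [B_bd _] := effect_hermitian B_eff.
have AB_bd := bounded_sub A_bd B_bd; set d := N (sub_op A B).
have d_ge0 : 0 <= d := opnorm_ge0 AB_bd.
have AB_le x : hn (A x - B x) <= d * hn x := hnorm_op_le AB_bd x.
have B_bd' := (hermitian_comp_compl (effect_hermitian B_eff)).1.
have A_bd' := (hermitian_comp_compl (effect_hermitian A_eff)).1.
have e1 : `|N A - N B| <= d := opnorm_lipschitz A_bd B_bd d_ge0 AB_le.
have e2 : `|N (compl_op A) - N (compl_op B)| <= d.
  apply: opnorm_lipschitz (bounded_compl A_bd) (bounded_compl B_bd) d_ge0 _ => x.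
  by rewrite /compl_op [x - A x]addrC addrKA -opprD hnormN.
have e3 : `|N (A \o compl_op A) - N (B \o compl_op B)| <= 3 * d.
  apply: opnorm_lipschitz A_bd' B_bd' _ (comp_compl_sub_le A_eff B_eff).
  by rewrite mulr_ge0.
have e4 : `|N (compl_op (A \o compl_op A)) - N (compl_op (B \o compl_op B))| <= 3 * d.
  apply: opnorm_lipschitz (bounded_compl A_bd') (bounded_compl B_bd') _ _ => [|x].
    by rewrite mulr_ge0.
  rewrite {1 2}/compl_op [x - _]addrC addrKA -opprD hnormN.
  exact: comp_compl_sub_le.
move: e1 e2 e3 e4; rewrite /S1 !ler_norml => /andP[? ?] /andP[? ?] /andP[? ?] /andP[? ?].
by apply/andP; split; lra.
Qed.

End Operators.

Theorem mainTheorem10 (R : realType) (H : lmodType R[i]) (ip : H -> H -> R[i])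
  (Hip : is_inner_product ip) (Hcomp : hcomplete ip) (Hsep : hseparable ip) :
  sharpness_measure ip (S1 ip).
Proof.
split; first exact: S1_range_effect.
split; first exact: S1_eq0_trivial.
split; first exact: S1_eq1_nontrivial_projection.
split; first exact: S1_compl.
split; first exact: S1_similar.
move=> A A_eff e e_gt0; exists (e / 8); first by rewrite divr_gt0.
move=> B B_eff AB_lt; apply: le_lt_trans (S1_lipschitz Hip A_eff B_eff) _.
by rewrite -ltr_pdivlMl // mulrC.
Qed.
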